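(* Let $\mathfrak{G}$ be the Goldman Lie algebra of the closed torus over $\mathbb{Z}$. Then the derived subalgebra $[\mathfrak{G},\mathfrak{G}]$ is the $\mathbb{Z}$-submodule of $\mathfrak{G}$ spanned by the elements $\gcd(i,j)\,a^ib^j$ for $i,j\in\mathbb{Z}\setminus\{0\}$, together with $n\,a^n$ and $n\,b^n$ for $n\in\mathbb{Z}\setminus\{0\}$.
   Context: Let $T^2=\Sigma_{1,0}$ be the closed oriented torus and $\hat\pi$ its set of free homotopy classes of loops, identified with $\pi_1(T^2)\cong\mathbb{Z}^2$; with $a,b$ the standard generators every class is written $a^ib^j$, $(i,j)\in\mathbb{Z}^2$. The Goldman bracket ($[\alpha,\beta]=\sum_{p\in\alpha\cap\beta}\epsilon(p)\,\alpha*_p\beta$ over transverse intersection points $p$, with $\epsilon(p)$ the intersection sign and $\alpha*_p\beta$ the concatenation at $p$, extended bilinearly) is given on the torus by $[a^ib^j,a^kb^l]=(il-jk)\,a^{i+k}b^{j+l}$. The Goldman Lie algebra over $\mathbb{Z}$ is the free abelian group $\mathbb{Z}\hat\pi$ with basis $\hat\pi$ and this bracket, and $[\mathfrak{G},\mathfrak{G}]$ is the $\mathbb{Z}$-span of all brackets. *)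

From HB Require Import structures.
From mathcomp Require Import all_boot all_order all_algebra.
From mathcomp.multinomials Require Import freeg.
Set Implicit Arguments. Unset Strict Implicit. Unset Printing Implicit Defensive.
Import Order.TTheory GRing.Theory Num.Theory.
Local Open Scope ring_scope.

(* Free homotopy classes of loops on the torus: a^i b^j  <->  (i, j). *)
Definition loopT := (int * int)%type.

(* The Goldman Lie algebra of the torus over Z: the free abelian group
   Z[pi-hat] with basis pi-hat = Z^2. *)
Definition goldman := {freeg loopT / int}.

Definition gen (c : int) (i j : int) : goldman := << c *g (i, j) >>.

(* Bracket on basis elements: [a^i b^j, a^k b^l] = (il - jk) a^(i+k) b^(j+l),
   extended bilinearly. *)
Definition gbracket_basis (p q : loopT) : goldman :=
  gen (p.1 * q.2 - p.2 * q.1) (p.1 + q.1) (p.2 + q.2).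

Definition gbracket (x y : goldman) : goldman :=
  \sum_(p <- dom x) \sum_(q <- dom y)
     gbracket_basis p q *~ (coeff p x * coeff q y).

Definition zspan (P : goldman -> Prop) (z : goldman) : Prop :=
  exists s : seq (int * goldman),
    (forall u, u \in s -> P u.2) /\ z = \sum_(u <- s) u.2 *~ u.1.

Definition derived (z : goldman) : Prop :=
  zspan (fun w => exists x y, w = gbracket x y) z.

Definition derived_gens (w : goldman) : Prop :=
  (exists i j : int, i != 0 /\ j != 0 /\ w = gen (gcdz i j) i j)
  \/ (exists n : int, n != 0 /\ w = gen n n 0)
  \/ (exists n : int, n != 0 /\ w = gen n 0 n).

(* Both sides are the elements whose coefficient at a^i b^j is divisible by
   gcd(i, j).  The bracket coefficient il - jk equals i(j+l) - j(i+k), hence is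
   divisible by gcd(i+k, j+l); conversely, for a Bezout relation
   u m + v n = gcd(m, n) the bracket of a^v b^(-u) and a^(m-v) b^(n+u) is
   exactly gcd(m, n) a^m b^n.  On the axes gcd(n, 0) = |n|, which gives the
   generators n a^n and n b^n. *)
From mathcomp Require Import all_boot all_order all_algebra.
From mathcomp.multinomials Require Import freeg.
From mathcomp Require Import ring.
Import Order.TTheory GRing.Theory Num.Theory.
Local Open Scope ring_scope.

Section ZSpan.

Variable P : goldman -> Prop.

Lemma zspan0 : zspan P 0.
Proof. by exists [::]; rewrite big_nil. Qed.

Lemma zspan_gen w : P w -> zspan P w.
Proof.
move=> Pw; exists [:: (1, w)]; rewrite big_seq1 mulr1z; split=> // u.
by rewrite inE => /eqP ->.
Qed.

Lemma zspanD x y : zspan P x -> zspan P y -> zspan P (x + y).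
Proof.
move=> [s [Ps ->]] [t [Pt ->]]; exists (s ++ t); rewrite big_cat; split=> // u.
by rewrite mem_cat => /orP[/Ps|/Pt].
Qed.

Lemma zspanMz x k : zspan P x -> zspan P (x *~ k).
Proof.
move=> [s [Ps ->]]; exists [seq (u.1 * k, u.2) | u <- s]; split.
  by move=> ? /mapP[u us ->] /=; apply: Ps.
by rewrite big_map mulrz_suml; apply: eq_bigr => u _; rewrite mulrzA.
Qed.

Lemma zspan_sum (I : Type) (r : seq I) (F : I -> goldman) :
  (forall i, zspan P (F i)) -> zspan P (\sum_(i <- r) F i).
Proof.
move=> PF; elim: r => [|i r IHr]; first by rewrite big_nil; apply: zspan0.
by rewrite big_cons; apply: zspanD.
Qed.

End ZSpan.

Lemma zspan_trans (P Q : goldman -> Prop) z :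
  (forall w, P w -> zspan Q w) -> zspan P z -> zspan Q z.
Proof.
move=> PQ [s [Ps ->]]; elim: s Ps => [|u s IHs] Ps.
  by rewrite big_nil; apply: zspan0.
rewrite big_cons; apply: zspanD; last by apply: IHs => v vs; apply/Ps/mem_behead.
by apply/zspanMz/PQ/Ps; rewrite inE eqxx.
Qed.

Lemma genMz c d i j : gen (c * d) i j = gen c i j *~ d.
Proof. by rewrite /gen freeg_mulz mulrzz. Qed.

Lemma gbracket_gen1 i j k l :
  gbracket (gen 1 i j) (gen 1 k l) = gbracket_basis (i, j) (k, l).
Proof.
by rewrite /gbracket /gen !domU1 !big_seq1 !coeffU !eqxx mulr1 mulr1z.
Qed.

Lemma dvdz_gcd_gbracket_coef i j k l :
  (gcdz (i + k) (j + l) %| i * l - j * k)%Z.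
Proof.
have -> : i * l - j * k = i * (j + l) - j * (i + k) by ring.
by rewrite rpredB // dvdz_mull // (dvdz_gcdr, dvdz_gcdl).
Qed.

Lemma zspan_gcd_gen i j : zspan derived_gens (gen (gcdz i j) i j).
Proof.
have [-> | i0] := eqVneq i 0; have [-> | j0] := eqVneq j 0.
- by rewrite /gen freegU0; apply: zspan0.
- rewrite gcd0z abszE normrEsg mulrC genMz.
  by apply/zspanMz/zspan_gen; right; right; exists j.
- rewrite gcdz0 abszE normrEsg mulrC genMz.
  by apply/zspanMz/zspan_gen; right; left; exists i.
- by apply: zspan_gen; left; exists i, j.
Qed.

Lemma zspan_dvd_gen c i j :
  (gcdz i j %| c)%Z -> zspan derived_gens (gen c i j).
Proof.
by move=> /dvdzP[d ->]; rewrite mulrC genMz; apply/zspanMz/zspan_gcd_gen.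
Qed.

Lemma zspan_gbracket x y : zspan derived_gens (gbracket x y).
Proof.
apply: zspan_sum => p; apply: zspan_sum => q; apply: zspanMz.
exact/zspan_dvd_gen/dvdz_gcd_gbracket_coef.
Qed.

Lemma derived_dvd_gen c i j : (gcdz i j %| c)%Z -> derived (gen c i j).
Proof.
move=> /dvdzP[d ->]; rewrite mulrC genMz; apply/zspanMz/zspan_gen.
have [u [v uv_gcd]] := Bezoutz i j.
exists (gen 1 v (- u)), (gen 1 (i - v) (j + u)).
rewrite gbracket_gen1 /gbracket_basis /= -uv_gcd.
congr gen; ring.
Qed.

Lemma derived_gens_dvd w :
  derived_gens w -> exists c i j, (gcdz i j %| c)%Z /\ w = gen c i j.
Proof.
case=> [[i [j [_ [_ ->]]]] | [[n [_ ->]] | [n [_ ->]]]].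
- by exists (gcdz i j), i, j.
- by exists n, n, 0; rewrite gcdz0 dvdzE abszE.
- by exists n, 0, n; rewrite gcd0z dvdzE abszE.
Qed.

Theorem mainTheorem4 (z : goldman) : derived z <-> zspan derived_gens z.
Proof.
split; apply: zspan_trans.
  by move=> _ [x [y ->]]; apply: zspan_gbracket.
move=> w /derived_gens_dvd[c [i [j [dvd_c ->]]]].
exact: derived_dvd_gen.
Qed.
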